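(* Let $d=2$. Assume $\beta\ne0$, $|\sigma^{(1)}|\ne|\sigma^{(2)}|$, and for $\alpha=1,2$: $\eta^{(\alpha)}\ne0$ and $\mathbf v^{(\alpha)}_+\not\equiv0$, $\mathbf v^{(\alpha)}_-\not\equiv0$. Then $$\widetilde f_{e,l}\le f^{(1)}\le\widetilde f_{e,u}.$$ Moreover $\widetilde f_{e,l}=f^{(1)}$ if and only if $\mathbf v^{(1)}_+$ or $\mathbf v^{(1)}_-$ is a nonzero constant on phase 1, and $\widetilde f_{e,u}=f^{(1)}$ if and only if $\mathbf v^{(2)}_+$ or $\mathbf v^{(2)}_-$ is a nonzero constant on phase 2. Finally $f_{e,l}\le\widetilde f_{e,l}$, with equality if and only if $B^{(1)}_{12}f_{e,l}=\mathbf e^{(1)}_1\cdot R_\perp\mathbf e^{(1)}_2$, and $\widetilde f_{e,u}\le f_{e,u}$, with equality if and only if $B^{(2)}_{12}(1-f_{e,u})=\mathbf e^{(2)}_1\cdot R_\perp\mathbf e^{(2)}_2$.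
   Context: Let $\Omega\subset\mathbb{R}^2$ be a bounded Lipschitz domain and let $\chi^{(1)}$ be the indicator function of a measurable subset of $\Omega$ (''phase 1''), $\chi^{(2)}=1-\chi^{(1)}$ (''phase 2''). Let $\sigma^{(\alpha)}=\sigma^{(\alpha)}_1+\mathrm{i}\sigma^{(\alpha)}_2$ ($\alpha=1,2$) be complex constants with $\sigma^{(\alpha)}_1>0$ and $\sigma^{(1)}\neq\sigma^{(2)}$, and $\sigma=\sigma^{(1)}\chi^{(1)}+\sigma^{(2)}\chi^{(2)}$. Let $V\in H^1(\Omega;\mathbb C)$ be a weak solution of $\nabla\cdot(\sigma\nabla V)=0$ in $\Omega$. Set $\mathbf E=-\nabla V=\mathbf E_1+\mathrm{i}\mathbf E_2$ with $\mathbf E_1,\mathbf E_2$ real. $\langle u\rangle=|\Omega|^{-1}\int_\Omega u$; $f^{(1)}=\langle\chi^{(1)}\rangle\in(0,1)$. For $\alpha,m=1,2$: $\mathbf E^{(\alpha)}_m=\chi^{(\alpha)}\mathbf E_m$, $\mathbf e^{(\alpha)}_m=\langle\mathbf E^{(\alpha)}_m\rangle$, $\eta^{(\alpha)}=\langle\|\mathbf E^{(\alpha)}_1\|^2\rangle+\langle\|\mathbf E^{(\alpha)}_2\|^2\rangle$. $\beta=\sigma^{(1)}_1\sigma^{(2)}_2-\sigma^{(1)}_2\sigma^{(2)}_1$. $f_{e,l}=(\|\mathbf e^{(1)}_1\|^2+\|\mathbf e^{(1)}_2\|^2)/\eta^{(1)}$, $f_{e,u}=1-(\|\mathbf e^{(2)}_1\|^2+\|\mathbf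 e^{(2)}_2\|^2)/\eta^{(2)}$. Let $R_\perp=\begin{bmatrix}0&1\\-1&0\end{bmatrix}$, $B^{(\alpha)}_{12}=\langle\mathbf E^{(\alpha)}_1\cdot R_\perp\mathbf E^{(\alpha)}_2\rangle$, and $\mathbf v^{(\alpha)}_\pm=\mathbf E^{(\alpha)}_1\pm R_\perp\mathbf E^{(\alpha)}_2$. Define $$\widetilde f_{e,l}=\max\Big\{\frac{\|\langle\mathbf v^{(1)}_-\rangle\|^2}{\langle\|\mathbf v^{(1)}_-\|^2\rangle},\frac{\|\langle\mathbf v^{(1)}_+\rangle\|^2}{\langle\|\mathbf v^{(1)}_+\|^2\rangle}\Big\},\qquad \widetilde f_{e,u}=\min\Big\{1-\frac{\|\langle\mathbf v^{(2)}_-\rangle\|^2}{\langle\|\mathbf v^{(2)}_-\|^2\rangle},1-\frac{\|\langle\mathbf v^{(2)}_+\rangle\|^2}{\langle\|\mathbf v^{(2)}_+\|^2\rangle}\Big\}.$$ *)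

From mathcomp Require Import all_boot all_order all_algebra all_classical all_reals all_analysis.
Import numFieldNormedType.Exports.
Import Order.TTheory GRing.Theory Num.Theory.
Set Implicit Arguments.
Unset Strict Implicit.
Unset Printing Implicit Defensive.
Local Open Scope ring_scope.
Local Open Scope classical_set_scope.

Notation mu2 R := ((@lebesgue_measure R) \x (@lebesgue_measure R))%E.

Section Defs.
Variable R : realType.
Implicit Types (Omega A : set (R * R)) (a b u v : R * R).

Definition dot2 u v : R := u.1 * v.1 + u.2 * v.2.
Definition nrm2 u : R := dot2 u u.
Definition Rperp u : R * R := (u.2, - u.1).
Definition addv u v : R * R := (u.1 + v.1, u.2 + v.2).
Definition subv u v : R * R := (u.1 - v.1, u.2 - v.2).
Definition sclv (c : R) u : R * R := (c * u.1, c * u.2).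

Definition avg Omega (f : R * R -> R) : R :=
  (fine ((mu2 R) Omega))^-1 * Rintegral (mu2 R) Omega f.
Definition avgv Omega (F : R * R -> R * R) : R * R :=
  (avg Omega (fun p => (F p).1), avg Omega (fun p => (F p).2)).

Definition pdx (f : R * R -> R) (p : R * R) : R := derive1 (fun t => f (t, p.2)) p.1.
Definition pdy (f : R * R -> R) (p : R * R) : R := derive1 (fun t => f (p.1, t)) p.2.
Definition pditer (s : seq bool) (f : R * R -> R) : R * R -> R :=
  foldr (fun (b : bool) g => if b then pdx g else pdy g) f s.
Definition smooth2 (f : R * R -> R) : Prop :=
  forall s : seq bool, continuous (pditer s f) /\
    forall p : R * R, derivable (fun t => pditer s f (t, p.2)) p.1 1 /\
                      derivable (fun t => pditer s f (p.1, t)) p.2 1.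
Definition test_fun Omega (phi : R * R -> R) : Prop :=
  smooth2 phi /\
  exists K : set (R * R), compact K /\ K `<=` Omega /\ (forall p, ~ K p -> phi p = 0).

Definition L2 Omega (f : R * R -> R) : Prop :=
  measurable_fun Omega f /\ (mu2 R).-integrable Omega (fun p => (f p ^+ 2)%:E).
Definition H1_weak_grad Omega (V : R * R -> R) (G : R * R -> R * R) : Prop :=
  L2 Omega V /\ L2 Omega (fun p => (G p).1) /\ L2 Omega (fun p => (G p).2) /\
  forall phi, test_fun Omega phi ->
    Rintegral (mu2 R) Omega (fun p => V p * pdx phi p)
      = - Rintegral (mu2 R) Omega (fun p => (G p).1 * phi p) /\
    Rintegral (mu2 R) Omega (fun p => V p * pdy phi p)
      = - Rintegral (mu2 R) Omega (fun p => (G p).2 * phi p).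

Definition rot2 (th : R) u : R * R :=
  (cos th * u.1 - sin th * u.2, sin th * u.1 + cos th * u.2).
Definition lipschitz_domain Omega : Prop :=
  open Omega /\ connected Omega /\ Omega !=set0 /\
  (exists M : R, forall p, Omega p -> `|p.1| <= M /\ `|p.2| <= M) /\
  (* near each boundary point, after a rigid motion Omega is the subgraph
     of a Lipschitz function *)
  (forall p, closure Omega p -> ~ Omega p ->
     exists (th r L : R) (g : R -> R),
       0 < r /\ (forall x y, `|g x - g y| <= L * `|x - y|) /\
       forall q, ball p r q ->
         (Omega q <-> (rot2 th (subv q p)).2 < g (rot2 th (subv q p)).1)).

(* phase indicators chi^(1) = 1_A, chi^(2) = 1 - chi^(1) *)
Definition chi (A : set (R * R)) (al : bool) (p : R * R) : R :=
  if al then \1_A p else 1 - \1_A p.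
(* sigma = sr + i si, sigma^(1) = s11 + i s12, sigma^(2) = s21 + i s22 *)
Definition sig_re A (s11 s21 : R) p : R := s11 * chi A true p + s21 * chi A false p.
Definition sig_im A (s12 s22 : R) p : R := s12 * chi A true p + s22 * chi A false p.

(* V = V1 + i V2 with weak gradients G1, G2 is a weak solution of
   div(sigma grad V) = 0, i.e. int (sigma grad V) . grad phi = 0 for all test phi
   (real and imaginary parts separately) *)
Definition weak_solution Omega A (s11 s12 s21 s22 : R) (G1 G2 : R * R -> R * R) : Prop :=
  forall phi, test_fun Omega phi ->
    Rintegral (mu2 R) Omega (fun p =>
      dot2 (subv (sclv (sig_re A s11 s21 p) (G1 p)) (sclv (sig_im A s12 s22 p) (G2 p)))
           (pdx phi p, pdy phi p)) = 0 /\
    Rintegral (mu2 R) Omega (fun p =>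
      dot2 (addv (sclv (sig_re A s11 s21 p) (G2 p)) (sclv (sig_im A s12 s22 p) (G1 p)))
           (pdx phi p, pdy phi p)) = 0.

(* ---- the field quantities; E1, E2 are the real/imag parts of E = - grad V ---- *)
Section Fields.
Variables (Omega A : set (R * R)) (E1 E2 : R * R -> R * R).
Definition Eph (al : bool) (m : bool) (p : R * R) : R * R :=
  sclv (chi A al p) (if m then E1 p else E2 p).
Definition eph al m : R * R := avgv Omega (Eph al m).
Definition eta al : R :=
  avg Omega (fun p => nrm2 (Eph al true p)) + avg Omega (fun p => nrm2 (Eph al false p)).
Definition beta (s11 s12 s21 s22 : R) : R := s11 * s22 - s12 * s21.
Definition f1 : R := avg Omega (chi A true).
Definition fel : R := (nrm2 (eph true true) + nrm2 (eph true false)) / eta true.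
Definition feu : R := 1 - (nrm2 (eph false true) + nrm2 (eph false false)) / eta false.
Definition B12 al : R := avg Omega (fun p => dot2 (Eph al true p) (Rperp (Eph al false p))).
Definition vpm al (pm : bool) (p : R * R) : R * R :=
  if pm then addv (Eph al true p) (Rperp (Eph al false p))
        else subv (Eph al true p) (Rperp (Eph al false p)).
Definition ratio al pm : R := nrm2 (avgv Omega (vpm al pm)) / avg Omega (fun p => nrm2 (vpm al pm p)).
Definition ftel : R := Num.max (ratio true false) (ratio true true).
Definition fteu : R := Num.min (1 - ratio false false) (1 - ratio false true).
End Fields.

End Defs.

(* Cauchy-Schwarz against the indicator of a phase: a square-integrable planar
   field v vanishing off a set S of measure W satisfies |∫ v|^2 <= W ∫ |v|^2, with
   equality iff v is a.e. constant on S.  For v = v^(α)_± this bounds each ratio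
   ||<v>||^2 / <||v||^2> by the volume fraction of phase α, which gives
   f~_{e,l} <= f^(1) <= f~_{e,u} and the equality cases.  Expanding v_± = E_1 ± R⊥ E_2
   writes these two ratios as (N ± 2C) / (η ± 2B) with N = ||e_1||^2 + ||e_2||^2,
   C = e_1 · R⊥ e_2 and B = B_12.  Their mediant N / η is f_{e,l} (resp. 1 - f_{e,u}),
   and a mediant never exceeds the larger of the two fractions, with equality iff
   they agree, i.e. iff B N / η = C. *)

From Pilot Require Import Defs.
From mathcomp Require Import all_boot all_order all_algebra all_classical all_reals all_analysis.
From mathcomp Require Import ring lra measurable_realfun.
Import numFieldNormedType.Exports.
Import Order.TTheory GRing.Theory Num.Theory.
Local Open Scope ring_scope.
Local Open Scope classical_set_scope.

Set Implicit Arguments.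
Unset Strict Implicit.

Definition rat_box (R : realType) (q : (rat * rat) * (rat * rat)) : set (R * R) :=
  `]ratr q.1.1, ratr q.1.2[ `*` `]ratr q.2.1, ratr q.2.2[.

Lemma open_prod_measurable (R : realType) (O : set (R * R)) : open O -> measurable O.
Proof.
move=> oO.
have -> : O = \bigcup_(q in [set q | rat_box q `<=` O]) rat_box q.
  apply/seteqP; split; last by move=> x [q /= qO /qO].
  move=> x /oO /nbhs_ballP[e /= e0 eO].
  have [q1 q1i] := @rat_in_itvoo R (x.1 - e) x.1 ltac:(by rewrite ltrBlDr ltrDl).
  have [q2 q2i] := @rat_in_itvoo R x.1 (x.1 + e) ltac:(by rewrite ltrDl).
  have [q3 q3i] := @rat_in_itvoo R (x.2 - e) x.2 ltac:(by rewrite ltrBlDr ltrDl).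
  have [q4 q4i] := @rat_in_itvoo R x.2 (x.2 + e) ltac:(by rewrite ltrDl).
  move: q1i q2i q3i q4i; rewrite !in_itv /= => /andP[a1 a2] /andP[b1 b2] /andP[c1 c2] /andP[d1 d2].
  exists ((q1, q2), (q3, q4)); last by split; rewrite /= in_itv /= ?a2 ?b1 ?c2 ?d1.
  move=> [y1 y2] [/=]; rewrite !in_itv /= => /andP[h1 h2] /andP[h3 h4].
  by apply: eO; split; rewrite /ball /= ltr_norml; apply/andP; split; lra.
rewrite bigcup_mkcond; apply: countable_bigcupT_measurable => [|q]; first exact: countableP.
by case: ifP => _; [apply: measurableX; exact: measurable_itv|exact: measurable0].
Qed.

Section SquareIntegrable.
Context d (T : measurableType d) (R : realType) (mu : {measure set T -> \bar R}).
Variable D : set T.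
Hypotheses (mD : measurable D) (finD : (mu D < +oo)%E).
Implicit Types (f g w : T -> R) (F : T -> R * R).

Notation Int f := (mu.-integrable D (EFin \o f)).

Definition sq_integrable f :=
  measurable_fun D f /\ mu.-integrable D (fun p => (f p ^+ 2)%:E).

Lemma integrable_cst_finite k : Int (fun _ => k).
Proof.
apply/integrableP; split; first exact/measurable_EFinP/measurable_cst.
under eq_integral do rewrite /= (_ : _ `|_| = `|k|%:E) //.
by rewrite integral_cst// lte_mul_pinfty.
Qed.

Lemma integrable_dominated f g : measurable_fun D f -> Int g ->
  (forall p, D p -> `|f p| <= g p) -> Int f.
Proof.
move=> mf ig fg; apply: le_integrable ig => //; first exact/measurable_EFinP.
by move=> p Dp /=; rewrite lee_fin (le_trans (fg p Dp)) ?ler_norm.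
Qed.

Lemma sq_integrable_integrable f : sq_integrable f -> Int f.
Proof.
move=> [mf if2]; apply: (integrable_dominated (g := fun p => 1 + f p ^+ 2) mf).
  exact: integrableD (integrable_cst_finite 1) if2.
move=> p _; have := normr_ge0 (f p).
have : `|f p| ^+ 2 = f p ^+ 2 by rewrite real_normK ?num_real.
nra.
Qed.

Lemma integrableM_sq f g : sq_integrable f -> sq_integrable g ->
  Int (fun p => f p * g p).
Proof.
move=> [mf if2] [mg ig2].
apply: (integrable_dominated (g := fun p => f p ^+ 2 + g p ^+ 2) (measurable_funM mf mg)).
  exact: integrableD if2 ig2.
move=> p _; rewrite normrM.
have : `|f p| ^+ 2 = f p ^+ 2 by rewrite real_normK ?num_real.
have : `|g p| ^+ 2 = g p ^+ 2 by rewrite real_normK ?num_real.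
have := normr_ge0 (f p); have := normr_ge0 (g p); nra.
Qed.

Lemma sq_integrableD f g : sq_integrable f -> sq_integrable g ->
  sq_integrable (fun p => f p + g p).
Proof.
move=> [mf if2] [mg ig2]; have mfg := measurable_funD mf mg.
split => //.
apply: (integrable_dominated (g := fun p => 2 * f p ^+ 2 + 2 * g p ^+ 2)
  (measurable_funX 2 mfg)).
  exact: integrableD (integrableZl mD 2 if2) (integrableZl mD 2 ig2).
move=> p _; rewrite ger0_norm ?sqr_ge0 //=.
have := sqr_ge0 (f p - g p); nra.
Qed.

Lemma sq_integrableZ k f : sq_integrable f -> sq_integrable (fun p => k * f p).
Proof.
move=> [mf if2]; split; first exact: measurable_funM (measurable_cst _) mf.
apply: (eq_integrable mD) (integrableZl mD (k ^+ 2) if2) => p _ /=.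
by rewrite exprMn.
Qed.

Lemma sq_integrableN f : sq_integrable f -> sq_integrable (fun p => - f p).
Proof.
by move=> /(sq_integrableZ (-1)); congr sq_integrable; apply/funext => p; rewrite mulN1r.
Qed.

Lemma RintegralN f : Int f -> \int[mu]_(p in D) - f p = - \int[mu]_(p in D) f p.
Proof.
move=> If; rewrite -mulN1r -RintegralZl //.
by apply: eq_Rintegral => p _; rewrite mulN1r.
Qed.

Lemma sq_integrable_le1 w : measurable_fun D w -> (forall p, `|w p| <= 1) ->
  sq_integrable w.
Proof.
move=> mw w1; split => //.
apply: (integrable_dominated (measurable_funX 2 mw) (integrable_cst_finite 1)).
by move=> p _; rewrite ger0_norm ?sqr_ge0 // -real_normK ?num_real // expr_le1.
Qed.

Lemma sq_integrableMl w f : measurable_fun D w -> (forall p, `|w p| <= 1) ->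
  sq_integrable f -> sq_integrable (fun p => w p * f p).
Proof.
move=> mw w1 [mf if2]; have mwf := measurable_funM mw mf.
split => //; apply: (integrable_dominated (measurable_funX 2 mwf) if2).
move=> p _; rewrite ger0_norm ?sqr_ge0 // exprMn.
have : w p ^+ 2 <= 1 by rewrite -real_normK ?num_real // expr_le1.
have := sqr_ge0 (f p); nra.
Qed.

Lemma Rintegral_eq0_ae g : measurable_fun D g -> Int g ->
  (forall p, D p -> 0 <= g p) ->
  \int[mu]_(p in D) g p = 0 -> {ae mu, forall p, D p -> g p = 0}.
Proof.
move=> mg ig g0 I0.
have : (\int[mu]_(x in D) `|(EFin \o g) x| = 0)%E.
  have <- : (\int[mu]_(x in D) (EFin \o g) x = 0)%E.
    by rewrite -(fineK (integrable_fin_num mD ig)) -[fine _]/(Rintegral _ _ _) I0.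
  by apply: eq_integral => p /[!inE] Dp /=; rewrite ger0_norm ?g0.
move/(ae_eq_integral_abs mu mD (proj2 (measurable_EFinP _ _) mg)).
by apply: filterS => p h Dp; case: (h Dp).
Qed.

Lemma ae_eq0_Rintegral g : measurable_fun D g ->
  {ae mu, forall p, D p -> g p = 0} -> \int[mu]_(p in D) g p = 0.
Proof.
move=> mg g0; rewrite /Rintegral (ae_eq_integral (cst 0)) ?integral0 //.
- exact/measurable_EFinP.
- by apply: filterS g0 => p h Dp; rewrite /= h.
Qed.

Definition Rintegral2 F : R * R := (\int[mu]_(p in D) (F p).1, \int[mu]_(p in D) (F p).2).

Section CauchySchwarzIndicator.
Variable S : set T.
Hypotheses (mS : measurable S) (SD : S `<=` D).

Let W := \int[mu]_(p in D) \1_S p.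

Lemma sq_integrable_indic : sq_integrable \1_S.
Proof.
apply: sq_integrable_le1; first exact: measurable_indic.
by move=> p; rewrite indicE; case: (_ \in _); rewrite ?normr1 ?normr0.
Qed.

Lemma Rintegral_sub_indic_sq f c : sq_integrable f ->
  (forall p, D p -> ~ S p -> f p = 0) ->
  \int[mu]_(p in D) (f p - c * \1_S p) ^+ 2
    = \int[mu]_(p in D) f p ^+ 2 - 2 * c * \int[mu]_(p in D) f p + c ^+ 2 * W.
Proof.
move=> hf f0.
have If := sq_integrable_integrable hf.
have I1 := sq_integrable_integrable sq_integrable_indic.
have Icf := integrableZl mD (- (2 * c)) If.
have Ic1 := integrableZl mD (c ^+ 2) I1.
rewrite (@eq_Rintegral _ _ _ mu D (fun p => f p ^+ 2 + (- (2 * c) * f p + c ^+ 2 * \1_S p))).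
  rewrite RintegralD //; last exact: integrableD Icf Ic1.
    rewrite RintegralD // !RintegralZl // /W; ring.
  exact: hf.2.
move=> p /[!inE] Dp; have [Sp|nSp] := pselect (S p).
  by rewrite indicE mem_set //=; ring.
by rewrite indicE memNset //= (f0 p Dp nSp); ring.
Qed.

Hypothesis W_gt0 : 0 < W.

Let quadratic_at_opt I J : J - 2 * (I / W) * I + (I / W) ^+ 2 * W = (W * J - I ^+ 2) / W.
Proof. by field; rewrite gt_eqF. Qed.

Lemma cauchy_schwarz_indic f : sq_integrable f -> (forall p, D p -> ~ S p -> f p = 0) ->
  (\int[mu]_(p in D) f p) ^+ 2 <= W * \int[mu]_(p in D) f p ^+ 2.
Proof.
move=> hf f0.
have := @Rintegral_ge0 _ _ _ mu D _
  (fun p _ => sqr_ge0 (f p - \int[mu]_(x in D) f x / W * \1_S p)).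
by rewrite Rintegral_sub_indic_sq // quadratic_at_opt pmulr_lge0 ?invr_gt0 // subr_ge0.
Qed.

Lemma cauchy_schwarz_indic_eq f : sq_integrable f ->
  (forall p, D p -> ~ S p -> f p = 0) ->
  (\int[mu]_(p in D) f p) ^+ 2 = W * \int[mu]_(p in D) f p ^+ 2 <->
  exists c, {ae mu, forall p, S p -> f p = c}.
Proof.
move=> hf f0; set I := \int[mu]_(p in D) f p; set J := \int[mu]_(p in D) f p ^+ 2.
have sq_dev c : sq_integrable (fun p => f p - c * \1_S p).
  have -> : (fun p => f p - c * \1_S p) = (fun p => f p + - c * \1_S p).
    by apply/funext => p; rewrite mulNr.
  exact: sq_integrableD hf (sq_integrableZ (- c) sq_integrable_indic).
split=> [IJ|[c fc]].
  exists (I / W).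
  have : \int[mu]_(p in D) (f p - I / W * \1_S p) ^+ 2 = 0.
    by rewrite Rintegral_sub_indic_sq // quadratic_at_opt IJ subrr mul0r.
  have [mdev idev] := sq_dev (I / W).
  move/(Rintegral_eq0_ae (measurable_funX 2 mdev) idev (fun p _ => sqr_ge0 _)).
  apply: filterS => p dev0 Sp; move/eqP: (dev0 (SD Sp)).
  by rewrite sqrf_eq0 indicE mem_set // mulr1 subr_eq0 => /eqP.
have Q0 : J - 2 * c * I + c ^+ 2 * W = 0.
  have [mdev _] := sq_dev c.
  rewrite -Rintegral_sub_indic_sq // ae_eq0_Rintegral //; first exact: measurable_funX.
  apply: filterS fc => p fpc Dp; have [Sp|nSp] := pselect (S p).
    by rewrite fpc // indicE mem_set // mulr1 subrr expr0n.
  by rewrite f0 // indicE memNset // mulr0 subrr expr0n.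
have := cauchy_schwarz_indic hf f0; rewrite -/I -/J => IJ.
have : W * (J - 2 * c * I + c ^+ 2 * W) = 0 by rewrite Q0 mulr0.
have := sqr_ge0 (I - c * W); nra.
Qed.

Section PlanarField.
Variable F : T -> R * R.
Hypotheses (hF1 : sq_integrable (fun p => (F p).1)) (hF2 : sq_integrable (fun p => (F p).2)).

Lemma Rintegral_nrm2 :
  \int[mu]_(p in D) nrm2 (F p)
    = \int[mu]_(p in D) (F p).1 ^+ 2 + \int[mu]_(p in D) (F p).2 ^+ 2.
Proof. by rewrite -RintegralD //; [case: hF1 | case: hF2]. Qed.

Lemma Rintegral_nrm2_gt0 : ~ {ae mu, forall p, D p -> F p = (0, 0)} ->
  0 < \int[mu]_(p in D) nrm2 (F p).
Proof.
move=> F_neq0; rewrite Rintegral_nrm2.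
have J_ge0 (g : T -> R) : 0 <= \int[mu]_(p in D) g p ^+ 2.
  by apply: Rintegral_ge0 => p _; exact: sqr_ge0.
rewrite lt_neqAle addr_ge0 // andbT; apply/eqP => /esym J0; apply: F_neq0.
have [J10 J20] : \int[mu]_(p in D) (F p).1 ^+ 2 = 0 /\ \int[mu]_(p in D) (F p).2 ^+ 2 = 0.
  by have := J_ge0 (fun p => (F p).1); have := J_ge0 (fun p => (F p).2); split; lra.
have := Rintegral_eq0_ae (measurable_funX 2 hF1.1) hF1.2 (fun p _ => sqr_ge0 _) J10.
have := Rintegral_eq0_ae (measurable_funX 2 hF2.1) hF2.2 (fun p _ => sqr_ge0 _) J20.
apply: filterS2 => p F2 F1 Dp; move: (F1 Dp) (F2 Dp) => /eqP + /eqP.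
by rewrite !sqrf_eq0 => /eqP F1p /eqP F2p; rewrite [F p]surjective_pairing F1p F2p.
Qed.

Hypothesis F_off : forall p, D p -> ~ S p -> F p = (0, 0).

Let F1_off p : D p -> ~ S p -> (F p).1 = 0.
Proof. by move=> Dp nSp; rewrite F_off. Qed.
Let F2_off p : D p -> ~ S p -> (F p).2 = 0.
Proof. by move=> Dp nSp; rewrite F_off. Qed.

Lemma cauchy_schwarz_indic2 :
  nrm2 (Rintegral2 F) <= W * \int[mu]_(p in D) nrm2 (F p).
Proof.
rewrite Rintegral_nrm2 /nrm2 /dot2 /= -!expr2 mulrDr.
exact: lerD (cauchy_schwarz_indic hF1 F1_off) (cauchy_schwarz_indic hF2 F2_off).
Qed.

Lemma cauchy_schwarz_indic2_eq : ~ {ae mu, forall p, D p -> F p = (0, 0)} ->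
  nrm2 (Rintegral2 F) = W * \int[mu]_(p in D) nrm2 (F p) <->
  exists2 c, c <> (0, 0) & {ae mu, forall p, S p -> F p = c}.
Proof.
move=> F_neq0; have le1 := cauchy_schwarz_indic hF1 F1_off.
have le2 := cauchy_schwarz_indic hF2 F2_off.
have [eq1 eq2] := (cauchy_schwarz_indic_eq hF1 F1_off, cauchy_schwarz_indic_eq hF2 F2_off).
rewrite Rintegral_nrm2 /nrm2 /dot2 /= -!expr2 mulrDr; split=> [IJ|[c _ Fc]].
  have [c1 Fc1] := eq1.1 ltac:(lra); have [c2 Fc2] := eq2.1 ltac:(lra).
  exists (c1, c2); last first.
    by apply: filterS2 Fc1 Fc2 => p F1 F2 Sp; rewrite [F p]surjective_pairing F1 ?F2.
  case=> c10 c20; apply: F_neq0; apply: filterS2 Fc1 Fc2 => p F1 F2 Dp.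
  have [Sp|nSp] := pselect (S p); last exact: F_off.
  by rewrite [F p]surjective_pairing F1 // F2 // c10 c20.
rewrite (eq1.2 _) ?(eq2.2 _) //; [exists c.2|exists c.1];
  by apply: filterS Fc => p Fp Sp; rewrite Fp.
Qed.

End PlanarField.
End CauchySchwarzIndicator.

End SquareIntegrable.

Lemma max_eq_ub d (T : orderType d) (x y z : T) : (x <= z)%O -> (y <= z)%O ->
  Order.max x y = z <-> x = z \/ y = z.
Proof.
move=> xz yz; case: leP => [xy|yx]; split=> [|[] // eq_z]; try by [left|right].
  by apply/le_anti; rewrite yz -eq_z.
by move: (lt_le_trans yx xz); rewrite eq_z ltxx.
Qed.

Section Mediant.
Variable R : realFieldType.
Implicit Types a b x y : R.

Lemma mediant_le_max a b x y : 0 < x -> 0 < y ->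
  (a + b) / (x + y) <= Num.max (a / x) (b / y).
Proof.
move=> x0 y0; rewrite -{1}(divfK (lt0r_neq0 x0) a) -{1}(divfK (lt0r_neq0 y0) b).
rewrite ler_pdivrMr ?addr_gt0 //.
by have [rs|sr] := leP (a / x) (b / y); nra.
Qed.

Lemma mediant_eq_max a b x y : 0 < x -> 0 < y ->
  (a + b) / (x + y) = Num.max (a / x) (b / y) <-> a / x = b / y.
Proof.
move=> x0 y0; have xy0 : x + y != 0 by rewrite gt_eqF ?addr_gt0.
rewrite -{1}(divfK (lt0r_neq0 x0) a) -{1}(divfK (lt0r_neq0 y0) b).
split=> [|->]; last by rewrite maxxx -mulrDr mulfK.
move/(congr1 ( *%R^~ (x + y))); rewrite (divfK xy0) => h; apply/eqP; rewrite -subr_eq0.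
move: h; have [rs|sr] := leP (a / x) (b / y) => h.
  have : (a / x - b / y) * x = 0 by rewrite mulrBl; lra.
  by move/eqP; rewrite mulf_eq0 (gt_eqF x0) orbF.
have : (b / y - a / x) * y = 0 by rewrite mulrBl; lra.
by move/eqP; rewrite mulf_eq0 (gt_eqF y0) orbF -oppr_eq0 opprB.
Qed.

Lemma mediant_pm (N C e B : R) : 0 < e - 2 * B -> 0 < e + 2 * B ->
  let M := Num.max ((N - 2 * C) / (e - 2 * B)) ((N + 2 * C) / (e + 2 * B)) in
  N / e <= M /\ (N / e = M <-> B * (N / e) = C).
Proof.
move=> x0 y0 M; have e0 : e != 0 by rewrite gt_eqF //; lra.
have Ne : N / e = ((N - 2 * C) + (N + 2 * C)) / ((e - 2 * B) + (e + 2 * B)).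
  by field; apply/andP; split => //; rewrite gt_eqF //; lra.
split; first by rewrite Ne; exact: mediant_le_max.
rewrite {1}Ne mediant_eq_max // mulrA; split=> [/eqP|BNC].
  rewrite eqr_div ?lt0r_neq0 // => /eqP cross.
  by apply: (mulIf e0); rewrite divfK //; nra.
have {}BNC : B * N = C * e by rewrite -BNC divfK.
by apply/eqP; rewrite eqr_div ?lt0r_neq0 //; apply/eqP; nra.
Qed.

End Mediant.

Definition pm_sign {R : pzRingType} (pm : bool) : R := if pm then 1 else -1.

Section PlusMinusPerp.
Variable R : realType.

(* [vpm A E1 E2 al pm p] unfolds to
   [pm_perp pm (Eph A E1 E2 al true p) (Eph A E1 E2 al false p)]. *)
Definition pm_perp (pm : bool) (u v : R * R) : R * R :=
  if pm then Defs.addv u (Rperp v) else Defs.subv u (Rperp v).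

Lemma nrm2_pm_perp pm u v :
  nrm2 (pm_perp pm u v) = nrm2 u + nrm2 v + pm_sign pm * (2 * dot2 u (Rperp v)).
Proof. by case: pm; rewrite /nrm2 /dot2 /=; ring. Qed.

End PlusMinusPerp.

Definition phase_set (R : realType) (Omega A : set (R * R)) (al : bool) : set (R * R) :=
  if al then A else Omega `\` A.

Section TwoPhase.
Variable R : realType.
Variables (Omega A : set (R * R)) (E1 E2 : R * R -> R * R).
Hypotheses (mO : measurable Omega) (mA : measurable A) (AO : A `<=` Omega).
Hypothesis vol_gt0 : 0 < fine (mu2 R Omega).
Hypotheses (hE11 : L2 Omega (fun p => (E1 p).1)) (hE12 : L2 Omega (fun p => (E1 p).2)).
Hypotheses (hE21 : L2 Omega (fun p => (E2 p).1)) (hE22 : L2 Omega (fun p => (E2 p).2)).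

Local Notation vol := (fine (mu2 R Omega)).
Local Notation Eph := (Eph A E1 E2).
Local Notation vpm := (vpm A E1 E2).

Let vol_fin : (mu2 R Omega < +oo)%E.
Proof. by move: vol_gt0; case: (mu2 R Omega) => //= [r _|]; rewrite ?ltry ?ltxx. Qed.

Let intD := integrableD (mu := mu2 R) mO.
Let intZ := integrableZl (mu := mu2 R) mO.
Let intM := integrableM_sq (mu := mu2 R) mO.
Let sqD := sq_integrableD (mu := mu2 R) mO.
Let sqN := sq_integrableN (mu := mu2 R) mO.

Lemma measurable_phase_set al : measurable (phase_set Omega A al).
Proof. by case: al => //=; exact: measurableD. Qed.

Lemma phase_set_sub al : phase_set Omega A al `<=` Omega.
Proof. by case: al => //= p []. Qed.

Lemma chi_phase_set al p : Omega p -> chi A al p = \1_(phase_set Omega A al) p.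
Proof.
move=> Op; rewrite /chi; case: al => //=; rewrite !indicE.
have [Ap|nAp] := pselect (A p).
  by rewrite (mem_set Ap) memNset ?subrr // => -[].
by rewrite (memNset nAp) mem_set ?subr0.
Qed.

Lemma measurable_chi al : measurable_fun Omega (chi A al).
Proof.
case: al; first exact: measurable_indic.
by apply: measurable_funB; [exact: measurable_cst|exact: measurable_indic].
Qed.

Lemma normr_chi_le1 al p : `|chi A al p| <= 1.
Proof.
by rewrite /chi indicE; case: al; case: (_ \in _); rewrite /= ?subr0 ?subrr ?normr1 ?normr0.
Qed.

Lemma L2_Eph al m :
  L2 Omega (fun p => (Eph al m p).1) /\ L2 Omega (fun p => (Eph al m p).2).
Proof.
have Mchi := sq_integrableMl (mu := mu2 R) mO (measurable_chi al) (normr_chi_le1 al).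
by case: m; split; [exact: Mchi hE11|exact: Mchi hE12|exact: Mchi hE21|exact: Mchi hE22].
Qed.

Lemma L2_vpm al pm :
  L2 Omega (fun p => (vpm al pm p).1) /\ L2 Omega (fun p => (vpm al pm p).2).
Proof.
have [[t1 t2] [f1 f2]] := (L2_Eph al true, L2_Eph al false).
by case: pm; split; [exact: sqD t1 f2|exact: sqD t2 (sqN f1)
                    |exact: sqD t1 (sqN f2)|exact: sqD t2 (sqN (sqN f1))].
Qed.

Lemma vpm_off_phase al pm p :
  Omega p -> ~ phase_set Omega A al p -> vpm al pm p = (0, 0).
Proof.
move=> Op nSp; have chi0 : chi A al p = 0 by rewrite chi_phase_set // indicE memNset.
rewrite /Defs.vpm /Defs.Eph chi0 /Defs.addv /Defs.subv /Rperp /sclv /=.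
by case: pm; rewrite !mul0r ?oppr0 ?subr0 ?addr0.
Qed.

Local Notation e al m := (eph Omega A E1 E2 al m).

Local Notation Int f := ((mu2 R).-integrable Omega (EFin \o f)).

Let integrable_L2 f : L2 Omega f -> Int f.
Proof. exact: (sq_integrable_integrable (mu := mu2 R) mO vol_fin). Qed.

Let avgD f g : Int f -> Int g -> avg Omega (fun p => f p + g p) = avg Omega f + avg Omega g.
Proof. by move=> If Ig; rewrite /avg RintegralD // mulrDr. Qed.

Let avgZ k f : Int f -> avg Omega (fun p => k * f p) = k * avg Omega f.
Proof. by move=> If; rewrite /avg RintegralZl // mulrCA. Qed.

Let avgN f : Int f -> avg Omega (fun p => - f p) = - avg Omega f.
Proof. by move=> If; rewrite /avg RintegralN // mulrN. Qed.

Lemma avgv_vpm al pm : avgv Omega (vpm al pm) = pm_perp pm (e al true) (e al false).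
Proof.
have [[t1 t2] [f1 f2]] := (L2_Eph al true, L2_Eph al false).
have [It1 It2] := (integrable_L2 t1, integrable_L2 t2).
have [If1 If2] := (integrable_L2 f1, integrable_L2 f2).
rewrite /eph /avgv /pm_perp /Defs.addv /Defs.subv /Rperp; case: pm => /=.
  by rewrite (avgD It1 If2) (avgD It2 (integrable_L2 (sqN f1))) (avgN If1).
rewrite (avgD It1 (integrable_L2 (sqN f2))) (avgD It2 (integrable_L2 (sqN (sqN f1)))).
by rewrite (avgN If2) (avgN (integrable_L2 (sqN f1))) (avgN If1).
Qed.

Let integrable_nrm2 (F : R * R -> R * R) :
  L2 Omega (fun p => (F p).1) -> L2 Omega (fun p => (F p).2) -> Int (fun p => nrm2 (F p)).
Proof. by move=> h1 h2; exact: intD (intM h1 h1) (intM h2 h2). Qed.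

Let integrable_cross (F G : R * R -> R * R) :
  L2 Omega (fun p => (F p).1) -> L2 Omega (fun p => (F p).2) ->
  L2 Omega (fun p => (G p).1) -> L2 Omega (fun p => (G p).2) ->
  Int (fun p => dot2 (F p) (Rperp (G p))).
Proof. by move=> f1 f2 g1 g2; exact: intD (intM f1 g2) (intM f2 (sqN g1)). Qed.

Lemma avg_nrm2_vpm al pm :
  avg Omega (fun p => nrm2 (vpm al pm p))
    = eta Omega A E1 E2 al + pm_sign pm * (2 * B12 Omega A E1 E2 al).
Proof.
have [[t1 t2] [f1 f2]] := (L2_Eph al true, L2_Eph al false).
rewrite (_ : (fun p => _) = fun p => nrm2 (Eph al true p) + nrm2 (Eph al false p)
    + pm_sign pm * (2 * dot2 (Eph al true p) (Rperp (Eph al false p)))); last first.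
  by apply/funext => p; exact: nrm2_pm_perp.
have [In1 In2] := (integrable_nrm2 t1 t2, integrable_nrm2 f1 f2).
have I2c := intZ 2 (integrable_cross t1 t2 f1 f2).
rewrite (avgD (intD In1 In2) (intZ (pm_sign pm) I2c)) (avgD In1 In2).
by rewrite (avgZ _ I2c) (avgZ _ (integrable_cross t1 t2 f1 f2)).
Qed.

Lemma ratio_vpm al pm : Defs.ratio Omega A E1 E2 al pm =
  (nrm2 (e al true) + nrm2 (e al false)
     + pm_sign pm * (2 * dot2 (e al true) (Rperp (e al false))))
  / (eta Omega A E1 E2 al + pm_sign pm * (2 * B12 Omega A E1 E2 al)).
Proof. by rewrite /Defs.ratio avgv_vpm nrm2_pm_perp avg_nrm2_vpm. Qed.

Lemma avg_chi_false : avg Omega (chi A false) = 1 - f1 Omega A.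
Proof.
have Ichi := integrable_L2 (sq_integrable_indic (mu := mu2 R) mO vol_fin mA).
rewrite /avg /f1 /avg /chi RintegralB // ?Rintegral_cst //; last exact: integrable_cst_finite.
by rewrite mulrBr mul1r mulVf // gt_eqF.
Qed.

Hypothesis phase_gt0 : forall al, 0 < avg Omega (chi A al).
Hypothesis vpm_neq0 : forall al pm, ~ {ae mu2 R, forall p, Omega p -> vpm al pm p = (0, 0)}.

Lemma ratio_le_phase al pm :
  [/\ 0 < avg Omega (fun p => nrm2 (vpm al pm p)),
      Defs.ratio Omega A E1 E2 al pm <= avg Omega (chi A al) &
      Defs.ratio Omega A E1 E2 al pm = avg Omega (chi A al) <->
      exists2 c, c <> (0, 0) & {ae mu2 R, forall p, phase_set Omega A al p -> vpm al pm p = c}].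
Proof.
set S := phase_set Omega A al; set W := \int[mu2 R]_(p in Omega) \1_S p.
set J := \int[mu2 R]_(p in Omega) nrm2 (vpm al pm p).
set N := nrm2 (Rintegral2 (mu2 R) Omega (vpm al pm)).
have avg_chi : avg Omega (chi A al) = vol^-1 * W.
  by rewrite /avg; congr (_ * _); apply: eq_Rintegral => p /[!inE] Op; exact: chi_phase_set.
have W_gt0 : 0 < W by move: (phase_gt0 al); rewrite avg_chi pmulr_rgt0 ?invr_gt0.
have [h1 h2] := L2_vpm al pm.
have J_gt0 : 0 < J := Rintegral_nrm2_gt0 (mu := mu2 R) mO h1 h2 (@vpm_neq0 al pm).
have ratio_N : Defs.ratio Omega A E1 E2 al pm = N / (vol * J).
  by rewrite /Defs.ratio /avgv /avg /N /J /Rintegral2 /nrm2 /dot2 /=; field; rewrite !gt_eqF.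
have avg_chi_WJ : avg Omega (chi A al) = W * J / (vol * J).
  by rewrite avg_chi; field; rewrite !gt_eqF.
have off p : Omega p -> ~ S p -> vpm al pm p = (0, 0) := @vpm_off_phase al pm p.
have mS := measurable_phase_set al.
have le := cauchy_schwarz_indic2 (mu := mu2 R) mO vol_fin mS W_gt0 h1 h2 off.
have eq := cauchy_schwarz_indic2_eq (mu := mu2 R) mO vol_fin mS (@phase_set_sub al) W_gt0
  h1 h2 off (@vpm_neq0 al pm).
split; first by rewrite /avg pmulr_rgt0 ?invr_gt0.
  by rewrite ratio_N avg_chi_WJ ler_pM2r ?invr_gt0 ?mulr_gt0.
rewrite ratio_N avg_chi_WJ; apply: iff_trans eq; split=> [|NWJ]; last first.
  by rewrite /N NWJ.
by apply: divIf; rewrite gt_eqF ?mulr_gt0.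
Qed.

(* For [al = true], [q] and [M] are f_{e,l} and f~_{e,l}; for [al = false] they are
   1 - f_{e,u} and 1 - f~_{e,u}. *)
Lemma phase_bounds al :
  let q := (nrm2 (e al true) + nrm2 (e al false)) / eta Omega A E1 E2 al in
  let M := Num.max (Defs.ratio Omega A E1 E2 al false) (Defs.ratio Omega A E1 E2 al true) in
  [/\ q <= M, q = M <-> B12 Omega A E1 E2 al * q = dot2 (e al true) (Rperp (e al false)),
      M <= avg Omega (chi A al) &
      M = avg Omega (chi A al) <->
      exists pm (c : R * R), c <> (0, 0) /\
        {ae mu2 R, forall p, phase_set Omega A al p -> vpm al pm p = c}].
Proof.
move=> q M.
have [[nF leF eqF] [nT leT eqT]] := (ratio_le_phase al false, ratio_le_phase al true).
rewrite !avg_nrm2_vpm /pm_sign mulN1r mul1r in nF nT.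
have [q_le q_eq] := mediant_pm (nrm2 (e al true) + nrm2 (e al false))
  (dot2 (e al true) (Rperp (e al false))) nF nT.
split; [by rewrite /M !ratio_vpm /pm_sign !mulN1r !mul1r..|by rewrite ge_max leF leT|].
rewrite max_eq_ub // eqF eqT; split.
  by case=> -[c c0 Sc]; [exists false|exists true]; exists c.
by case=> -[] [c [c0 Sc]]; [right|left]; exists c.
Qed.

End TwoPhase.

Lemma avg_neq0_measure_gt0 (R : realType) (Omega : set (R * R)) (f : R * R -> R) :
  avg Omega f != 0 -> 0 < fine (mu2 R Omega).
Proof.
rewrite /avg lt_neqAle fine_ge0 ?measure_ge0 // andbT.
by apply: contra => /eqP <-; rewrite invr0 mul0r.
Qed.

Unset Implicit Arguments.

Theorem mainTheorem7 (R : realType) (Omega A : set (R * R))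
  (s11 s12 s21 s22 : R) (V1 V2 : R * R -> R) (G1 G2 : R * R -> R * R) :
  lipschitz_domain Omega ->
  measurable A -> A `<=` Omega ->
  0 < s11 -> 0 < s21 -> (s11, s12) <> (s21, s22) ->
  H1_weak_grad Omega V1 G1 -> H1_weak_grad Omega V2 G2 ->
  weak_solution Omega A s11 s12 s21 s22 G1 G2 ->
  let E1 := fun p => sclv (-1) (G1 p) in
  let E2 := fun p => sclv (-1) (G2 p) in
  0 < f1 Omega A < 1 ->
  beta s11 s12 s21 s22 != 0 ->
  s11 ^+ 2 + s12 ^+ 2 != s21 ^+ 2 + s22 ^+ 2 ->
  (forall al, eta Omega A E1 E2 al != 0) ->
  (forall al pm, ~ {ae (mu2 R), forall p, Omega p -> vpm A E1 E2 al pm p = (0, 0)}) ->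
  [/\ ftel Omega A E1 E2 <= f1 Omega A <= fteu Omega A E1 E2,
      ftel Omega A E1 E2 = f1 Omega A <->
        exists pm (c : R * R), c <> (0, 0) /\
          {ae (mu2 R), forall p, A p -> vpm A E1 E2 true pm p = c},
      fteu Omega A E1 E2 = f1 Omega A <->
        exists pm (c : R * R), c <> (0, 0) /\
          {ae (mu2 R), forall p, (Omega `\` A) p -> vpm A E1 E2 false pm p = c},
      fel Omega A E1 E2 <= ftel Omega A E1 E2 /\
        (fel Omega A E1 E2 = ftel Omega A E1 E2 <->
         B12 Omega A E1 E2 true * fel Omega A E1 E2
           = dot2 (eph Omega A E1 E2 true true) (Rperp (eph Omega A E1 E2 true false)))
    & fteu Omega A E1 E2 <= feu Omega A E1 E2 /\
        (fteu Omega A E1 E2 = feu Omega A E1 E2 <->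
         B12 Omega A E1 E2 false * (1 - feu Omega A E1 E2)
           = dot2 (eph Omega A E1 E2 false true) (Rperp (eph Omega A E1 E2 false false)))].
Proof.
move=> [oO _] mA AO _ _ _ [_ [g11 [g12 _]]] [_ [g21 [g22 _]]] _ E1 E2 /andP[f1_gt0 f1_lt1].
move=> _ _ _ vpm_neq0.
have mO := open_prod_measurable oO.
have vol_gt0 := avg_neq0_measure_gt0 (f := chi A true) (lt0r_neq0 f1_gt0).
have hE := sq_integrableZ (mu := mu2 R) mO (-1).
have phase_gt0 al : 0 < avg Omega (chi A al).
  by case: al => //; rewrite avg_chi_false // subr_gt0.
have PB := phase_bounds (E1 := E1) (E2 := E2) mO mA AO vol_gt0
  (hE _ g11) (hE _ g12) (hE _ g21) (hE _ g22) phase_gt0 vpm_neq0.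
have [q1_le q1_eq M1_le M1_eq] := PB true.
have [q2_le q2_eq M2_le M2_eq] := PB false.
rewrite avg_chi_false // in M2_le M2_eq.
rewrite /fteu -addr_minr -oppr_max /fel /feu /ftel subKr.
split=> //; first by rewrite M1_le /=; lra.
- by apply: iff_trans M2_eq; split=> ?; lra.
split; first lra.
by apply: iff_trans q2_eq; split=> ?; lra.
Qed.
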